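(* Let $p\in\mathbb{R}[\mathbf{x}]$ be a homogeneous polynomial of degree $d$ in $n$ variables and let $r\in\mathbb{N}$. Define \[ p^{(r)}=\max\Big\{\lambda\in\mathbb{R}:\ \Big(\sum_{i=1}^nx_i\Big)^r\Big(p(\mathbf{x})-\lambda\Big(\sum_{i=1}^nx_i\Big)^d\Big)\ \text{has only nonnegative coefficients}\Big\}, \] and let $\underline{f}_{\mathrm{LP}}^{(r+d)}$ be the optimal value of the linear program \[ \min\ L(p)\quad\text{s.t.}\quad L(1)=1,\quad L(1)\le 1,\quad L(\mathbf{x}^\alpha)\ge 0\ (|\alpha|\le r+d),\quad L(\mathbf{x}^\alpha)=L\Big(\mathbf{x}^\alpha\sum_{i=1}^nx_i\Big)\ (|\alpha|\le r+d-1), \] over linear functionals $L:\mathbb{R}[\mathbf{x}]_{r+d}\to\mathbb{R}$ (this is the LP relaxation of order $r+d$ of $\min_{\mathbf{x}\in\Delta_{n-1}}p(\mathbf{x})=\inf\{\int_{\Delta_{n-1}}p\,\mathrm{d}\mu:\mu\in\mathcal{M}(\Delta_{n-1})_+,\ \int_{\Delta_{n-1}}\mathrm{d}\mu=1\}$). Then $p^{(r)}=\underline{f}_{\mathrm{LP}}^{(r+d)}$.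
   Context: $\Delta_{n-1}=\{\mathbf{x}\in\mathbb{R}^n_+:x_1+\dots+x_n=1\}$; $\mathcal{M}(\Delta_{n-1})_+$ is the cone of positive finite Borel measures on $\Delta_{n-1}$; $\mathbb{R}[\mathbf{x}]_{r+d}$ is the space of real polynomials of degree at most $r+d$; $\mathbf{x}^\alpha=x_1^{\alpha_1}\cdots x_n^{\alpha_n}$, $|\alpha|=\sum_i\alpha_i$. *)

From HB Require Import structures.
From mathcomp Require Import all_boot all_order all_algebra.
From mathcomp Require Import reals.
From mathcomp Require Import mpoly.
Set Implicit Arguments. Unset Strict Implicit. Unset Printing Implicit Defensive.
Import Order.TTheory GRing.Theory Num.Theory.
Local Open Scope ring_scope.

Definition sumx (R : realType) (n : nat) : {mpoly R[n]} := \sum_(i < n) 'X_i.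

Definition nonneg_coeffs (R : realType) (n : nat) (q : {mpoly R[n]}) : Prop :=
  forall m : 'X_{1..n}, 0 <= q@_m.

Definition polya_set (R : realType) (n : nat) (p : {mpoly R[n]}) (d r : nat)
    (lam : R) : Prop :=
  nonneg_coeffs (sumx R n ^+ r * (p - lam *: sumx R n ^+ d)).

Definition lp_feasible (R : realType) (n : nat) (k : nat)
    (L : {mpoly R[n]} -> R) : Prop :=
  (forall (a : R) (q1 q2 : {mpoly R[n]}), L (a *: q1 + q2) = a * L q1 + L q2) /\
  L 1 = 1 /\ L 1 <= 1 /\
  (forall a : 'X_{1..n}, (mdeg a <= k)%N -> 0 <= L 'X_[a]) /\
  (forall a : 'X_{1..n}, (mdeg a < k)%N -> L 'X_[a] = L ('X_[a] * sumx R n)).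

Definition lp_values (R : realType) (n : nat) (p : {mpoly R[n]}) (k : nat)
    (v : R) : Prop :=
  exists L : {mpoly R[n]} -> R, @lp_feasible R n k L /\ v = L p.

Definition is_max (R : realType) (S : R -> Prop) (v : R) : Prop :=
  S v /\ forall y, S y -> y <= v.

Definition is_min (R : realType) (S : R -> Prop) (v : R) : Prop :=
  S v /\ forall y, S y -> v <= y.

From HB Require Import structures.
From mathcomp Require Import all_boot all_order all_algebra.
From mathcomp Require Import reals.
From mathcomp Require Import mpoly.
Set Implicit Arguments. Unset Strict Implicit. Unset Printing Implicit Defensive.
Import Order.TTheory GRing.Theory Num.Theory.
Local Open Scope ring_scope.

(* Weak duality: a feasible L satisfies L q = L (q * sumx) on forms of degree
   < r + d, so L p = L (sumx^r p) and L (sumx^(r+d)) = L 1 = 1; as L is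
   nonnegative on the coefficientwise nonnegative form sumx^r (p - lam sumx^d)
   of degree r + d, every lam of the Polya set is at most L p.  Both optima are
   the least ratio (sumx^r p)_al / (sumx^(r+d))_al over |al| = r + d: this
   ratio lies in the Polya set, and it is the value at p of the feasible
   functional that reads off the normalised coefficient of x^al in
   sumx^(r+d-j) q for every form q of degree j. *)

Section PolyaLP.
Variables (R : realType) (n : nat).
Implicit Types (p q : {mpoly R[n]}) (m : 'X_{1..n}).
Local Notation s := (sumx R n).

Lemma nonneg_coeffsM p q :
  nonneg_coeffs p -> nonneg_coeffs q -> nonneg_coeffs (p * q).
Proof.
move=> p_ge0 q_ge0 m; rewrite mcoeffM.
by apply: sumr_ge0 => i _; apply: mulr_ge0.
Qed.

Lemma nonneg_coeffs_mpolyX m : nonneg_coeffs ('X_[m] : {mpoly R[n]}).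
Proof. by move=> m'; rewrite mcoeffX ler0n. Qed.

Lemma nonneg_coeffs_sumx : nonneg_coeffs s.
Proof.
move=> m; rewrite /sumx raddf_sum.
by apply: sumr_ge0 => i _; apply: nonneg_coeffs_mpolyX.
Qed.

Lemma nonneg_coeffsX q k : nonneg_coeffs q -> nonneg_coeffs (q ^+ k).
Proof.
move=> q_ge0; elim: k => [|k IHk]; first by move=> m; rewrite mcoeff1 ler0n.
by rewrite exprS; apply: nonneg_coeffsM.
Qed.

Lemma sumx_homog : s \is 1.-homog.
Proof. by apply: rpred_sum => i _; rewrite dhomogX /= mdeg1. Qed.

Lemma sumxX_homog k : s ^+ k \is k.-homog.
Proof. by have := dhomogMn k sumx_homog; rewrite mul1n. Qed.

Lemma mcoeff_sumxX_gt0 k m : mdeg m = k -> 0 < (s ^+ k)@_m.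
Proof.
elim: k m => [|k IHk] m deg_m.
  by move/eqP: deg_m; rewrite mdeg_eq0 => /eqP->; rewrite mcoeff1 eqxx ltr01.
have /existsP [i m_i_gt0] : [exists i, (0 < m i)%N].
  apply: contraT; rewrite negb_exists => /forallP m0.
  move: deg_m; rewrite mdegE big1 // => j _.
  by apply/eqP; rewrite -leqn0 leqNgt m0.
have Ui_le_m : (U_(i) <= m)%MM.
  by apply/mnm_lepP => j; rewrite mnm1E; case: eqP => [<-|].
have deg_mUi : mdeg (m - U_(i))%MM = k.
  apply/eqP; rewrite -(eqn_add2r (mdeg U_(i))) -mdegD submK //.
  by rewrite deg_m mdeg1 addn1.
rewrite exprSr /sumx mulr_sumr raddf_sum (bigD1 i) //=.
rewrite -{1}(submK Ui_le_m) addmC mcoeffMX.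
apply: (lt_le_trans (IHk _ deg_mUi)); rewrite lerDl.
apply: sumr_ge0 => j _.
have sk_ge0 := nonneg_coeffsX k nonneg_coeffs_sumx.
exact: nonneg_coeffsM sk_ge0 (nonneg_coeffs_mpolyX _) m.
Qed.

Lemma linear_mpolyE (L : {scalar {mpoly R[n]}}) q :
  L q = \sum_(m <- msupp q) q@_m * L 'X_[m].
Proof.
by rewrite {1}(mpolyE q) linear_sum; apply: eq_bigr => m _; rewrite linearZ.
Qed.

Section SumxInvariance.
Variables (k : nat) (L : {scalar {mpoly R[n]}}).
Hypothesis L_sumx : forall a, (mdeg a < k)%N -> L 'X_[a] = L ('X_[a] * s).

Lemma sumx_invariant_homog q j :
  q \is j.-homog -> (j < k)%N -> L q = L (q * s).
Proof.
move=> q_homog j_lt_k.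
rewrite [in RHS](mpolyE q) mulr_suml linear_sum linear_mpolyE.
apply: eq_big_seq => m m_supp.
by rewrite -scalerAl linearZ /= L_sumx // (dhomog_mf q_homog m_supp).
Qed.

Lemma sumxX_invariant_homog q j i :
  q \is j.-homog -> (j + i <= k)%N -> L q = L (q * s ^+ i).
Proof.
move=> q_homog; elim: i => [|i IHi] ji_le_k; first by rewrite mulr1.
rewrite IHi ?(leq_trans _ ji_le_k) ?leq_add2l // exprSr mulrA.
apply: sumx_invariant_homog (dhomogM q_homog (sumxX_homog i)) _.
by rewrite -addnS.
Qed.

End SumxInvariance.

Lemma polya_set_le_lp_value L p d r lam :
  lp_feasible (r + d) L -> p \is d.-homog -> polya_set p d r lam -> lam <= L p.
Proof.
move=> [L_lin [L1 [_ [L_ge0 L_sumx]]]] p_homog lam_polya.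
pose L' : {scalar {mpoly R[n]}} :=
  HB.pack L (GRing.isLinear.Build _ _ _ _ L L_lin).
set Q := s ^+ r * (p - lam *: s ^+ d).
have Q_homog : Q \is (r + d).-homog.
  by apply: dhomogM (sumxX_homog r) _; rewrite rpredB ?rpredZ ?sumxX_homog.
have LQ_ge0 : 0 <= L' Q.
  rewrite linear_mpolyE big_seq; apply: sumr_ge0 => m m_supp.
  apply: mulr_ge0 (lam_polya m) (L_ge0 _ _).
  by rewrite (dhomog_mf Q_homog m_supp).
have L'_sumx := sumxX_invariant_homog (L := L') L_sumx.
have Lp : L' p = L' (s ^+ r * p).
  by rewrite mulrC (L'_sumx _ _ r p_homog) // addnC.
have Lsumx : L' (s ^+ (r + d)) = 1.
  by rewrite -L1 -[s ^+ _]mul1r -(L'_sumx _ _ _ (dhomog1 _ _)).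
move: LQ_ge0; rewrite /Q mulrBr -scalerAr -exprD linearB linearZ -Lp Lsumx.
by rewrite /= mulr1 subr_ge0.
Qed.

(* For |al| = k, coef_moment m = al! (k - |m|)! / ((al - m)! k!) is the
   probability of drawing the colour sequence m without replacement from an
   urn of composition al. *)
Section CoefficientFunctional.
Variables (k : nat) (al : 'X_{1..n}).

Definition coef_moment m := ('X_[m] * s ^+ (k - mdeg m))@_al / (s ^+ k)@_al.

Definition coef_functional q : R :=
  \sum_(b : 'X_{1..n < k.+1}) q@_b * coef_moment b.

Lemma coef_functional_is_linear : linear_for *%R coef_functional.
Proof.
move=> a q1 q2 /=; rewrite /coef_functional mulr_sumr -big_split /=.
by apply: eq_bigr => b _; rewrite mcoeffD mcoeffZ mulrDl -mulrA.
Qed.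

HB.instance Definition _ :=
  GRing.isLinear.Build R {mpoly R[n]} R *%R coef_functional
    coef_functional_is_linear.

Lemma coef_functionalX a :
  (mdeg a <= k)%N -> coef_functional 'X_[a] = coef_moment a.
Proof.
move=> a_le_k; have a_lt_k1 : (mdeg a < k.+1)%N by [].
rewrite /coef_functional (bigD1 (BMultinom a_lt_k1)) //=.
rewrite mcoeffX eqxx mul1r big1 ?addr0 // => b b_neq_a.
rewrite mcoeffX; case: eqP => [a_b|]; last by rewrite mul0r.
by move: b_neq_a; rewrite -val_eqE /= -a_b eqxx.
Qed.

Lemma coef_functional_homog q j : q \is j.-homog -> (j <= k)%N ->
  coef_functional q = (q * s ^+ (k - j))@_al / (s ^+ k)@_al.
Proof.
move=> q_homog j_le_k; rewrite linear_mpolyE [in RHS](mpolyE q).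
rewrite mulr_suml raddf_sum mulr_suml; apply: eq_big_seq => m m_supp.
have deg_m := dhomog_mf q_homog m_supp.
rewrite /= -scalerAl mcoeffZ -mulrA coef_functionalX ?deg_m //.
by rewrite /coef_moment deg_m.
Qed.

Lemma lp_feasible_coef_functional :
  mdeg al = k -> lp_feasible k coef_functional.
Proof.
move=> deg_al; have sk_al_gt0 := mcoeff_sumxX_gt0 deg_al.
have L1 : coef_functional 1 = 1.
  rewrite -mpolyX0 coef_functionalX ?mdeg0 // /coef_moment mdeg0 subn0 mpolyX0.
  by rewrite mul1r divff ?gt_eqF.
split; first exact: linearP.
split; first exact: L1.
split; first by rewrite L1.
split=> a deg_a.
  rewrite coef_functionalX // divr_ge0 ?(ltW sk_al_gt0) //.
  apply: nonneg_coeffsM (nonneg_coeffs_mpolyX _) _ al.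
  exact: nonneg_coeffsX nonneg_coeffs_sumx.
have Xa_homog : 'X_[a] * s \is (mdeg a).+1.-homog.
  by rewrite -addn1; apply: dhomogM sumx_homog; rewrite dhomogX.
rewrite coef_functionalX 1?ltnW // (coef_functional_homog Xa_homog deg_a).
rewrite /coef_moment.
by rewrite -mulrA -exprS subnS prednK // subn_gt0.
Qed.

End CoefficientFunctional.

Definition polya_ratio p d r m := (s ^+ r * p)@_m / (s ^+ (r + d))@_m.

Lemma coef_functional_polya_ratio p d r al : p \is d.-homog ->
  coef_functional (r + d) al p = polya_ratio p d r al.
Proof.
move=> p_homog; rewrite (coef_functional_homog _ p_homog (leq_addl r d)).
by rewrite addnK [p * _]mulrC.
Qed.

Lemma polya_set_polya_ratio p d r al : p \is d.-homog ->
  (forall m, mdeg m = (r + d)%N -> polya_ratio p d r al <= polya_ratio p d r m) ->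
  polya_set p d r (polya_ratio p d r al).
Proof.
move=> p_homog al_min m; rewrite mulrBr -scalerAr -exprD mcoeffB mcoeffZ.
have [deg_m|deg_m] := eqVneq (mdeg m) (r + d)%N.
  by rewrite subr_ge0 -ler_pdivlMr ?mcoeff_sumxX_gt0 ?al_min.
have rp_homog : s ^+ r * p \is (r + d).-homog.
  exact: dhomogM (sumxX_homog r) p_homog.
rewrite (dhomog_nemf_coeff rp_homog) ?(dhomog_nemf_coeff (sumxX_homog _)) //.
by rewrite mulr0 subr0.
Qed.

Lemma exists_mdeg_argmin (f : 'X_{1..n} -> R) k : (0 < n)%N ->
  exists2 al, mdeg al = k & forall m, mdeg m = k -> f al <= f m.
Proof.
move=> n_gt0.
have deg_b0 : (mdeg (U_(Ordinal n_gt0) *+ k)%MM < k.+1)%N.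
  by rewrite mdegMn mdeg1 mul1n.
have b0_deg : mdeg (BMultinom deg_b0) == k by rewrite /= mdegMn mdeg1 mul1n.
have [b /eqP deg_b b_min] :=
  arg_minP (P := fun b : 'X_{1..n < k.+1} => mdeg b == k) (fun b => f b) b0_deg.
exists (val b) => // m deg_m.
have deg_m' : (mdeg m < k.+1)%N by rewrite deg_m.
exact: (b_min (BMultinom deg_m')) (introT eqP deg_m).
Qed.

End PolyaLP.

Theorem theorem11 (R : realType) (n : nat) (hn : (0 < n)%N)
    (d : nat) (p : {mpoly R[n]}) (hp : p \is d.-homog) (r : nat) :
  exists v : R,
    is_max (polya_set p d r) v /\ is_min (lp_values p (r + d)) v.
Proof.
have [al deg_al al_min] := exists_mdeg_argmin (polya_ratio p d r) (r + d) hn.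
have feasible := lp_feasible_coef_functional R deg_al.
have value := coef_functional_polya_ratio r al hp.
have polya := polya_set_polya_ratio hp al_min.
exists (polya_ratio p d r al); split; split => //.
- by move=> lam /(polya_set_le_lp_value feasible hp); rewrite value.
- by exists (coef_functional (r + d) al); rewrite value.
- by move=> _ [L [L_feasible ->]]; apply: polya_set_le_lp_value L_feasible hp polya.
Qed.
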